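(* A general binary sextic $p \in H_6(\mathbb{C}^2)$ can be written as $p(x,y) = f^2(x,y) + g^3(x,y)$, where $f \in H_3(\mathbb{C}^2)$ is a cubic form and $g \in H_2(\mathbb{C}^2)$ is a quadratic form.
   Context: $H_d(\mathbb{C}^n)$ denotes the complex vector space of homogeneous polynomials of degree $d$ in $n$ variables. ''A general $p$ has property P'' means P holds for all $p$ in a nonempty Zariski-open subset of $H_d(\mathbb{C}^n)$. *)

From HB Require Import structures.
From mathcomp Require Import all_boot all_order all_algebra.
Set Implicit Arguments. Unset Strict Implicit. Unset Printing Implicit Defensive.
Import Order.TTheory GRing.Theory Num.Theory.
Local Open Scope ring_scope.

(* Binary forms in variables x, y are elements of {poly {poly R}}:
   p`_i`_j is the coefficient of x^j y^i  (outer variable = y, inner = x). *)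

Definition homog (R : nzRingType) (d : nat) (p : {poly {poly R}}) : Prop :=
  forall i j : nat, p`_i`_j != 0 -> (i + j)%N = d.

Definition coords (R : nzRingType) (d : nat) (p : {poly {poly R}}) : 'rV[R]_d.+1 :=
  \row_(i < d.+1) p`_i`_(d - i).

Inductive polyfun (R : nzRingType) (n : nat) : ('rV[R]_n -> R) -> Prop :=
  | pf_const (c : R) : polyfun (fun _ => c)
  | pf_coord (k : 'I_n) : polyfun (fun v => v ord0 k)
  | pf_add f g : polyfun f -> polyfun g -> polyfun (fun v => f v + g v)
  | pf_mul f g : polyfun f -> polyfun g -> polyfun (fun v => f v * g v).

Definition zero_locus (R : nzRingType) (n : nat) (S : ('rV[R]_n -> R) -> Prop)
  (v : 'rV[R]_n) : Prop := forall h, S h -> h v = 0.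

From HB Require Import structures.
From mathcomp Require Import all_boot all_order all_algebra closed_field.
From mathcomp Require Import zify ring.
From Stdlib Require Import Classical.
Set Implicit Arguments. Unset Strict Implicit. Unset Printing Implicit Defensive.
Import Order.TTheory GRing.Theory Num.Theory.
Local Open Scope ring_scope.

(* Dehomogenising, consider the polynomial map Phi : C^7 -> C^7 sending the
   coefficients of (f, g), deg f <= 3, deg g <= 2, to the coefficients of
   f^2 + g^3.  The proof has three ingredients.
   1. Dominance: a polynomial map C^n -> C^n whose Jacobian is invertible at
      one point has Zariski-dense image: a polynomial vanishing on the image
      vanishes identically (induction on the degree, via the chain rule).
   2. Constructibility: by quantifier elimination for algebraically closed
      fields, "v is in the image of Phi" is a quantifier-free formula, and
      every quantifier-free formula has a constant truth value on a nonempty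
      open set {q <> 0}.  By 1 this value must be "true".
   3. For Phi the Jacobian at (f, g) = (1, t^2) is diag(2,2,2,2,3,3,3).
   Finally homogenisation turns the open set of C^7 into the open subset of
   H_6(C^2) required by the statement.  Polynomial functions are handled
   through an explicit syntax of polynomial expressions, which gives access
   to degrees and formal partial derivatives. *)

Section UnivariatePoly.
Variable R : numDomainType.

Lemma poly_eq0_of_horner (P : {poly R}) : (forall t, P.[t] = 0) -> P = 0.
Proof.
move=> P_eq0; apply/eqP; apply/negPn/negP => P_neq0.
suff: (size P < size P)%N by rewrite ltnn.
have := @max_poly_roots _ P [seq i%:R | i <- iota 0 (size P)] P_neq0.
rewrite size_map size_iota; apply.
- by apply/allP => x /mapP[i _ ->]; rewrite /root P_eq0.
- by rewrite map_inj_uniq ?iota_uniq // => i j /eqP; rewrite eqr_nat => /eqP.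
Qed.

Lemma deriv_eq0_polyC (P : {poly R}) : P^`() = 0 -> P = (P`_0)%:P.
Proof.
move=> dP0; apply: size1_polyC; rewrite leqNgt; apply/negP => size_gt1.
have : P`_(size P).-1 != 0 by rewrite -lead_coefE lead_coef_eq0 -size_poly_gt0; lia.
have : P^`()`_((size P).-2) = 0 by rewrite dP0 coef0.
rewrite coef_deriv (_ : (size P).-2.+1 = (size P).-1)%N; last by lia.
by move/eqP; rewrite mulrn_eq0 => /orP[/eqP|/eqP->]; [lia | rewrite eqxx].
Qed.

End UnivariatePoly.

Section PolyExpr.
Variable R : numDomainType.

Inductive expr (n : nat) : Type :=
| ECst of R | EVar of 'I_n | EAdd of expr n & expr n | EMul of expr n & expr n.
Arguments ECst {n}.
Arguments EVar {n}.

Fixpoint eval n (e : expr n) (v : 'rV[R]_n) : R :=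
  match e with
  | ECst c => c | EVar k => v ord0 k
  | EAdd a b => eval a v + eval b v | EMul a b => eval a v * eval b v end.

Fixpoint edeg n (e : expr n) : nat :=
  match e with
  | ECst _ => 0 | EVar _ => 1
  | EAdd a b => maxn (edeg a) (edeg b) | EMul a b => (edeg a + edeg b)%N end.

(* Formal partial derivative; constant factors are dropped so that the
   degree strictly decreases (edeg_ederiv). *)
Fixpoint ederiv n (k : 'I_n) (e : expr n) : expr n :=
  match e with
  | ECst _ => ECst 0 | EVar j => ECst (j == k)%:R
  | EAdd a b => EAdd (ederiv k a) (ederiv k b)
  | EMul a b => EAdd (if edeg a == 0%N then ECst 0 else EMul (ederiv k a) b)
                     (if edeg b == 0%N then ECst 0 else EMul a (ederiv k b)) end.

(* Substituting univariate polynomials Q k for the variables: the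
   restriction of e to the polynomial curve t |-> (Q k).[t]. *)
Fixpoint esubst n (e : expr n) (Q : 'I_n -> {poly R}) : {poly R} :=
  match e with
  | ECst c => c%:P | EVar k => Q k
  | EAdd a b => esubst a Q + esubst b Q | EMul a b => esubst a Q * esubst b Q end.

Lemma polyfun_eval n (e : expr n) : polyfun (eval e).
Proof.
elim: e => [c|k|a IHa b IHb|a IHa b IHb] /=.
- exact: pf_const.
- exact: pf_coord.
- exact: pf_add.
- exact: pf_mul.
Qed.

Lemma horner_esubst n (e : expr n) Q t :
  (esubst e Q).[t] = eval e (\row_k (Q k).[t]).
Proof.
elim: e => [c|k|a IHa b IHb|a IHa b IHb] /=.
- by rewrite hornerC.
- by rewrite mxE.
- by rewrite hornerD IHa IHb.
- by rewrite hornerM IHa IHb.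
Qed.

Lemma esubst_deg0 n (e : expr n) Q : edeg e = 0%N -> esubst e Q = (eval e 0)%:P.
Proof.
elim: e => [c|k|a IHa b IHb|a IHa b IHb] //=.
- move=> /eqP; rewrite -leqn0 geq_max !leqn0 => /andP[/eqP/IHa-> /eqP/IHb->].
  by rewrite polyCD.
- by move=> /eqP; rewrite addn_eq0 => /andP[/eqP/IHa-> /eqP/IHb->]; rewrite polyCM.
Qed.

Lemma eval_deg0 n (e : expr n) x y : edeg e = 0%N -> eval e x = eval e y.
Proof.
move=> e_deg0; suff eval0 z : eval e z = eval e 0 by rewrite !eval0.
have := horner_esubst e (fun k => (z ord0 k)%:P) 0.
rewrite esubst_deg0 // hornerC => ->.
by congr eval; apply/rowP => k; rewrite mxE hornerC.
Qed.

Lemma deriv_esubst n (e : expr n) Q :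
  (esubst e Q)^`() = \sum_k esubst (ederiv k e) Q * (Q k)^`().
Proof.
elim: e => [c|j|a IHa b IHb|a IHa b IHb] /=.
- by rewrite derivC big1 // => k _; rewrite mul0r.
- rewrite (bigD1 j) //= eqxx mul1r big1 ?addr0 // => k /negbTE.
  by rewrite eq_sym => ->; rewrite mul0r.
- by rewrite derivD IHa IHb -big_split /=; apply: eq_bigr => k _; rewrite mulrDl.
rewrite derivM; under eq_bigr => k _ do rewrite /= mulrDl.
rewrite big_split /=; congr (_ + _).
- case: eqP => [/(esubst_deg0 Q)->|_]; last first.
    by rewrite IHa mulr_suml; apply: eq_bigr => k _ /=; rewrite -!mulrA [_^`() * _]mulrC.
  by rewrite derivC mul0r big1 // => k _; rewrite mul0r.
- case: eqP => [/(esubst_deg0 Q)->|_]; last first.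
    by rewrite IHb mulr_sumr; apply: eq_bigr => k _ /=; rewrite mulrA.
  by rewrite derivC mulr0 big1 // => k _; rewrite mul0r.
Qed.

(* Differentiation lowers the degree, so induction on the degree works. *)
Lemma edeg_ederiv n (k : 'I_n) (e : expr n) : (edeg (ederiv k e) <= (edeg e).-1)%N.
Proof.
elim: e => [c|j|a IHa b IHb|a IHa b IHb] //=.
- by move: IHa IHb; rewrite -!subn1; lia.
rewrite geq_max; apply/andP; split.
- by case: eqP => //= a_deg; move: IHa; rewrite -!subn1; lia.
- by case: eqP => //= b_deg; move: IHb; rewrite -!subn1; lia.
Qed.

End PolyExpr.
Arguments ECst {R n}.
Arguments EVar {R n}.

(* Functions on R^n whose restriction to every affine line is a univariate
   polynomial.  They form a ring without zero divisors (line_poly_mul_eq0),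
   which is all we need to know about polynomial functions. *)
Section LinePoly.
Variable R : numDomainType.

Definition line n (x v : 'rV[R]_n) : 'I_n -> {poly R} :=
  fun k => (x ord0 k)%:P + (v ord0 k)%:P * 'X.

Lemma horner_line n (x v : 'rV[R]_n) t : \row_k (line x v k).[t] = x + t *: v.
Proof.
apply/rowP => k; rewrite !mxE /line hornerD hornerC hornerMX hornerC.
by rewrite mulrC.
Qed.

Definition line_poly n (h : 'rV[R]_n -> R) :=
  forall x v, exists P : {poly R}, forall t, h (x + t *: v) = P.[t].

Lemma line_poly_cst n c : line_poly (fun _ : 'rV[R]_n => c).
Proof. by move=> x v; exists c%:P => t; rewrite hornerC. Qed.

Lemma line_poly_add n (a b : 'rV[R]_n -> R) :
  line_poly a -> line_poly b -> line_poly (fun x => a x + b x).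
Proof.
move=> la lb x v; have [P aP] := la x v; have [P' bP'] := lb x v.
by exists (P + P') => t; rewrite aP bP' hornerD.
Qed.

Lemma line_poly_mul n (a b : 'rV[R]_n -> R) :
  line_poly a -> line_poly b -> line_poly (fun x => a x * b x).
Proof.
move=> la lb x v; have [P aP] := la x v; have [P' bP'] := lb x v.
by exists (P * P') => t; rewrite aP bP' hornerM.
Qed.

Lemma line_poly_ext n (a b : 'rV[R]_n -> R) :
  a =1 b -> line_poly a -> line_poly b.
Proof. by move=> eq_ab la x v; have [P aP] := la x v; exists P => t; rewrite -eq_ab. Qed.

Lemma line_poly_sum n (I : Type) (r : seq I) (F : I -> 'rV[R]_n -> R) :
  (forall i, line_poly (F i)) -> line_poly (fun x => \sum_(i <- r) F i x).
Proof.
move=> lF; elim: r => [|i r IH].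
  by apply: line_poly_ext (line_poly_cst 0) => x; rewrite big_nil.
by apply: line_poly_ext (line_poly_add (lF i) IH) => x; rewrite big_cons.
Qed.

Lemma line_poly_prod n (I : Type) (r : seq I) (F : I -> 'rV[R]_n -> R) :
  (forall i, line_poly (F i)) -> line_poly (fun x => \prod_(i <- r) F i x).
Proof.
move=> lF; elim: r => [|i r IH].
  by apply: line_poly_ext (line_poly_cst 1) => x; rewrite big_nil.
by apply: line_poly_ext (line_poly_mul (lF i) IH) => x; rewrite big_cons.
Qed.

Lemma line_poly_det n m (M : 'rV[R]_n -> 'M[R]_m) :
  (forall i j, line_poly (fun w => M w i j)) -> line_poly (fun w => \det (M w)).
Proof.
move=> lM; apply: line_poly_sum => s; apply: line_poly_mul; first exact: line_poly_cst.
by apply: line_poly_prod => i; apply: lM.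
Qed.

Lemma line_poly_eval n (e : expr R n) : line_poly (eval e).
Proof.
by move=> x v; exists (esubst e (line x v)) => t; rewrite horner_esubst horner_line.
Qed.

(* If a * b = 0 and a is not identically zero then b is identically zero:
   compare both on the line through a point where a does not vanish. *)
Lemma line_poly_mul_eq0 n (a b : 'rV[R]_n -> R) : line_poly a -> line_poly b ->
  (forall x, a x * b x = 0) -> (exists x, a x != 0) -> forall x, b x = 0.
Proof.
move=> la lb ab0 [x1 ax1] x2.
have [P aP] := la x1 (x2 - x1); have [P' bP'] := lb x1 (x2 - x1).
have /eqP : P * P' = 0.
  by apply: poly_eq0_of_horner => t; rewrite hornerM -aP -bP' ab0.
rewrite mulf_eq0 => /orP[/eqP P0|/eqP P'0].
  by move: ax1; have := aP 0; rewrite scale0r addr0 P0 horner0 => ->; rewrite eqxx.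
by have := bP' 1; rewrite scale1r (addrC x1) subrK P'0 horner0.
Qed.

Lemma nonzero_mul n (a b : expr R n) : (exists v, eval a v != 0) ->
  (exists v, eval b v != 0) -> exists v, eval a v * eval b v != 0.
Proof.
move=> a_nz [y by_nz]; apply: NNPP => ab_nz.
have ab0 x : eval a x * eval b x = 0.
  by apply/eqP; apply: negbNE; apply/negP => ab_x; apply: ab_nz; exists x.
have := line_poly_mul_eq0 (line_poly_eval a) (line_poly_eval b) ab0 a_nz y.
by move/eqP; rewrite (negbTE by_nz).
Qed.

Lemma eval_const_of_ederiv n (e : expr R n) :
  (forall k x, eval (ederiv k e) x = 0) -> forall x y, eval e x = eval e y.
Proof.
move=> de0 x y; set Q := line x (y - x).
have /deriv_eq0_polyC esubst_const : (esubst e Q)^`() = 0.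
  rewrite deriv_esubst; apply: poly_eq0_of_horner => t.
  rewrite horner_sum big1 // => k _.
  by rewrite hornerM horner_esubst de0 mul0r.
have := horner_esubst e Q 0; have := horner_esubst e Q 1.
rewrite !horner_line scale0r addr0 scale1r (addrC x) subrK esubst_const !hornerC.
by move=> <- <-.
Qed.

End LinePoly.

(* Phi : R^n -> R^n maps polynomial curves to polynomial curves
   (through PhiP), J w is its Jacobian matrix at w (the first-order
   coefficient of the image of the line through w in direction delta k), and
   J is invertible at some point. *)
Section Dominance.
Variables (R : numDomainType) (n : nat).
Variable Phi : 'rV[R]_n -> 'rV[R]_n.
Variable PhiP : ('I_n -> {poly R}) -> 'I_n -> {poly R}.
Variable J : 'rV[R]_n -> 'M[R]_n.

Definition delta (k : 'I_n) : 'rV[R]_n := \row_i (i == k)%:R.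

Hypothesis Phi_curve : forall Q t, Phi (\row_k (Q k).[t]) = \row_j (PhiP Q j).[t].
Hypothesis J_coef : forall w j k, J w j k = (PhiP (line w (delta k)) j)`_1.
Hypothesis J_line_poly : forall j k, line_poly (fun w => J w j k).
Hypothesis J_regular : exists w0, \det (J w0) != 0.

Lemma line_poly_comp (e : expr R n) : line_poly (fun w => eval e (Phi w)).
Proof.
move=> x u; exists (esubst e (PhiP (line x u))) => t.
by rewrite horner_esubst -Phi_curve horner_line.
Qed.

(* Chain rule: the gradient of e at Phi w, times J w, is the gradient of
   e \o Phi at w, which is zero when e \o Phi is. *)
Lemma gradient_mul_jacobian (e : expr R n) : (forall w, eval e (Phi w) = 0) ->
  forall w, (\row_j eval (ederiv j e) (Phi w)) *m J w = 0.
Proof.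
move=> e_Phi0 w; apply/rowP => k; rewrite !mxE.
set Q := PhiP (line w (delta k)).
have eQ0 : esubst e Q = 0.
  by apply: poly_eq0_of_horner => t; rewrite horner_esubst -Phi_curve horner_line.
have := congr1 (horner^~ 0) (deriv_esubst e Q).
rewrite eQ0 derivC horner0 horner_sum => grad0; rewrite [RHS]grad0.
apply: eq_bigr => i _.
rewrite !mxE hornerM horner_esubst -Phi_curve horner_line scale0r addr0.
by rewrite J_coef horner_coef0 coef_deriv mulr1n.
Qed.

(* Multiplying by the adjugate, det (J w) * (d_j e)(Phi w) = 0 for all w;
   since det J is not identically zero, each d_j e vanishes on the image. *)
Lemma ederiv_comp_eq0 (e : expr R n) : (forall w, eval e (Phi w) = 0) ->
  forall j w, eval (ederiv j e) (Phi w) = 0.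
Proof.
move=> e_Phi0 j; have [w0 detJ0] := J_regular.
apply: (line_poly_mul_eq0 (line_poly_det J_line_poly) (line_poly_comp _) _
  (ex_intro _ w0 detJ0)).
move=> w; have := congr1 (mulmx^~ (\adj (J w))) (gradient_mul_jacobian e_Phi0 w).
rewrite -mulmxA mul_mx_adj mul_mx_scalar mul0mx => /rowP/(_ j).
by rewrite !mxE.
Qed.

(* Induction on the degree: the partial derivatives of e vanish on the image,
   hence everywhere, so e is constant, equal to its value 0 on the image. *)
Theorem dominance (e : expr R n) : (forall w, eval e (Phi w) = 0) -> forall v, eval e v = 0.
Proof.
have [w0 _] := J_regular.
elim: {e}(edeg e).+1 {-2}e (ltnSn (edeg e)) => // d IH e e_deg e_Phi0 v.
have [e_deg0|e_deg_nz] := eqVneq (edeg e) 0%N.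
  by rewrite (eval_deg0 v (Phi w0) e_deg0) e_Phi0.
have de0 k : forall x, eval (ederiv k e) x = 0.
  apply: IH (ederiv_comp_eq0 e_Phi0 k).
  by have := edeg_ederiv k e; move: e_deg e_deg_nz; lia.
by rewrite (eval_const_of_ederiv de0 v (Phi w0)) e_Phi0.
Qed.

End Dominance.
Arguments delta {R n}.

Section GenericQF.
Variable R : numDomainType.

Definition generically n (P : 'rV[R]_n -> Prop) :=
  exists q : expr R n, (exists v, eval q v != 0) /\ forall v, eval q v != 0 -> P v.

(* Basic closure properties; generically_and uses that the intersection of
   two nonempty open sets is nonempty (nonzero_mul). *)
Lemma generically_all n (P : 'rV[R]_n -> Prop) : (forall v, P v) -> generically P.
Proof.
by move=> allP; exists (ECst 1); split=> [|v _]; [exists 0; rewrite oner_eq0 | exact: allP].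
Qed.

Lemma generically_and n (P1 P2 : 'rV[R]_n -> Prop) :
  generically P1 -> generically P2 -> generically (fun v => P1 v /\ P2 v).
Proof.
move=> [q1 [q1_nz P1q1]] [q2 [q2_nz P2q2]]; exists (EMul q1 q2); split.
  exact: nonzero_mul.
by move=> v /=; rewrite mulf_eq0 negb_or => /andP[/P1q1 ? /P2q2 ?].
Qed.

Lemma generically_impl n (P1 P2 : 'rV[R]_n -> Prop) :
  (forall v, P1 v -> P2 v) -> generically P1 -> generically P2.
Proof. by move=> P12 [q [q_nz P1q]]; exists q; split=> // v /P1q /P12. Qed.

Definition generic_bool n (x : 'rV[R]_n -> bool) :=
  exists b, generically (fun v => x v = b).

Lemma generic_bool_op n (op : bool -> bool -> bool) (x1 x2 : 'rV[R]_n -> bool) :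
  generic_bool x1 -> generic_bool x2 -> generic_bool (fun v => op (x1 v) (x2 v)).
Proof.
move=> [b1 gen1] [b2 gen2]; exists (op b1 b2).
by apply: generically_impl (generically_and gen1 gen2) => v [-> ->].
Qed.

Fixpoint epow n (e : expr R n) (m : nat) : expr R n :=
  if m is m'.+1 then EMul (epow e m') e else ECst 1.

Fixpoint expr_of_term n (t : GRing.term R) : expr R n :=
  match t with
  | GRing.Var i => if @insub nat (fun i => (i < n)%N) 'I_n i is Some k then EVar k else ECst 0
  | GRing.Const c => ECst c
  | GRing.NatConst m => ECst m%:R
  | GRing.Add a b => EAdd (expr_of_term n a) (expr_of_term n b)
  | GRing.Opp a => EMul (ECst (-1)) (expr_of_term n a)
  | GRing.NatMul a m => EMul (expr_of_term n a) (ECst m%:R)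
  | GRing.Mul a b => EMul (expr_of_term n a) (expr_of_term n b)
  | GRing.Inv _ => ECst 0
  | GRing.Exp a m => epow (expr_of_term n a) m
  end.

Definition env n (v : 'rV[R]_n) : seq R := [seq v ord0 k | k <- enum 'I_n].

Lemma nth_env n (v : 'rV[R]_n) (j : 'I_n) : (env v)`_j = v ord0 j.
Proof. by rewrite /env (nth_map j) ?size_enum_ord // nth_ord_enum. Qed.

Lemma size_env n (v : 'rV[R]_n) : size (env v) = n.
Proof. by rewrite size_map size_enum_ord. Qed.

Lemma env_nth n (v : 'rV[R]_n) i :
  nth 0 (env v) i = if @insub nat (fun i => (i < n)%N) 'I_n i is Some k then v ord0 k else 0.
Proof.
case: insubP => [k _ val_k|i_ge_n]; last by rewrite nth_default // size_env leqNgt.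
by have <- : nat_of_ord k = i := val_k; rewrite nth_env.
Qed.

Lemma eval_expr_of_term n (t : GRing.term R) (v : 'rV[R]_n) :
  GRing.rterm t -> eval (expr_of_term n t) v = GRing.eval (env v) t.
Proof.
elim: t => [i|c|m|a IHa b IHb|a IHa|a IHa m|a IHa b IHb|a IHa|a IHa m] //=.
- by rewrite env_nth; case: insubP.
- by move=> /andP[/IHa-> /IHb->].
- by move=> /IHa->; rewrite mulN1r.
- by move=> /IHa->; rewrite mulr_natr.
- by move=> /andP[/IHa-> /IHb->].
- move=> /IHa <-; elim: m => [|m IHm] /=; first by rewrite expr0.
  by rewrite IHm exprSr.
Qed.

Lemma generic_bool_equal n (t1 t2 : GRing.term R) : GRing.rterm t1 -> GRing.rterm t2 ->
  generic_bool (fun v : 'rV[R]_n => GRing.eval (env v) t1 == GRing.eval (env v) t2).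
Proof.
move=> r1 r2; set d := EAdd (expr_of_term n t1) (EMul (ECst (-1)) (expr_of_term n t2)).
have eval_d v : eval d v = GRing.eval (env v) t1 - GRing.eval (env v) t2.
  by rewrite /= !eval_expr_of_term // mulN1r.
have [[v d_nz]|d0] := classic (exists v, eval d v != 0).
  by exists false, d; split=> [|w]; [exists v | rewrite eval_d subr_eq0 => /negbTE].
exists true; apply: generically_all => v; rewrite -subr_eq0 -eval_d.
by apply/negPn/negP => d_nz; apply: d0; exists v.
Qed.

Lemma qf_generic_bool n (f : GRing.formula R) : GRing.qf_form f -> GRing.rformula f ->
  generic_bool (fun v : 'rV[R]_n => GRing.qf_eval (env v) f).
Proof.
elim: f => [b|t1 t2|t|f1 IH1 f2 IH2|f1 IH1 f2 IH2|f1 IH1 f2 IH2|f1 IH1|i f1 IH1|i f1 IH1] //=.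
- by move=> _ _; exists b; apply: generically_all.
- by move=> _ /andP[r1 r2]; apply: generic_bool_equal.
- by move=> /andP[q1 q2] /andP[r1 r2]; apply: generic_bool_op; [apply: IH1|apply: IH2].
- by move=> /andP[q1 q2] /andP[r1 r2]; apply: generic_bool_op; [apply: IH1|apply: IH2].
- by move=> /andP[q1 q2] /andP[r1 r2]; apply: (generic_bool_op implb); [apply: IH1|apply: IH2].
- move=> q1 r1; have [b gen] := IH1 q1 r1.
  by exists (~~ b); apply: generically_impl gen => v ->.
Qed.

End GenericQF.

(* A vector Q of
   7 entries of a ring A encodes f = Q_0 + Q_1 X + Q_2 X^2 + Q_3 X^3 and
   g = Q_4 + Q_5 X + Q_6 X^2; the coefficients of f^2 + g^3 give 7 entries. *)
Definition slice_poly (A : nzRingType) (m o : nat) (Q : 'I_7 -> A) : {poly A} :=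
  \poly_(i < m) Q (inord (o + i)).
Notation fpoly := (slice_poly 4%N 0%N).
Notation gpoly := (slice_poly 3%N 4%N).

Definition sq_cube (A : comNzRingType) (Q : 'I_7 -> A) : {poly A} :=
  fpoly Q ^+ 2 + gpoly Q ^+ 3.

Lemma eq_slice_poly (A : nzRingType) m o (Q Q' : 'I_7 -> A) :
  Q =1 Q' -> slice_poly m o Q = slice_poly m o Q'.
Proof. by move=> eqQ; apply: eq_poly => i _. Qed.

Lemma eq_sq_cube (A : comNzRingType) (Q Q' : 'I_7 -> A) : Q =1 Q' -> sq_cube Q = sq_cube Q'.
Proof. by move=> eqQ; rewrite /sq_cube !(eq_slice_poly _ _ eqQ). Qed.

Lemma map_sq_cube (A B : comNzRingType) (f : {rmorphism A -> B}) (Q : 'I_7 -> A) :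
  map_poly f (sq_cube Q) = sq_cube (f \o Q).
Proof.
have map_slice m o : map_poly f (slice_poly m o Q) = slice_poly m o (f \o Q).
  by apply/polyP => i; rewrite coef_map !coef_poly; case: ifP => _ //; exact: rmorph0.
by rewrite /sq_cube rmorphD !rmorphXn /= !map_slice.
Qed.

Section SquarePlusCube.
Variable R : numDomainType.

Definition Phi (w : 'rV[R]_7) : 'rV[R]_7 := \row_j (sq_cube (w ord0))`_j.

Lemma Phi_curve (Q : 'I_7 -> {poly R}) t :
  Phi (\row_k (Q k).[t]) = \row_j ((sq_cube Q)`_j).[t].
Proof.
apply/rowP => j; rewrite !mxE -[_.[t]]/(horner_eval t _) -coef_map map_sq_cube.
rewrite (eq_sq_cube (Q := (\row_k (Q k).[t]) ord0) (Q' := horner_eval t \o Q)) //.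
by move=> k; rewrite mxE.
Qed.

(* Jacobian matrix: column k holds the first-order coefficient of Phi along
   the line through w in the direction of the k-th basis vector. *)
Definition J (w : 'rV[R]_7) : 'M[R]_7 :=
  \matrix_(j, k) (sq_cube (line w (delta k)))`_j`_1.

(* Entries of the Jacobian are polynomial in w: along a line they are
   read off sq_cube of a two-parameter family. *)
Lemma J_line_poly j k : line_poly (fun w => J w j k).
Proof.
move=> x v.
pose Q2 k' : {poly {poly R}} := (line x v k')%:P + (delta k ord0 k')%:P%:P * 'X.
exists (sq_cube Q2)`_j`_1 => t; rewrite mxE.
suff -> : sq_cube (line (x + t *: v) (delta k)) =
    map_poly (map_poly (horner_eval t)) (sq_cube Q2).
  by rewrite !coef_map.
rewrite map_sq_cube; apply: eq_sq_cube => k' /=.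
rewrite /Q2 rmorphD rmorphM /= !map_polyC map_polyX /= !horner_evalE hornerC.
by rewrite {1}/line -horner_line mxE.
Qed.

(* Along a line the coefficient polynomials are affine in the parameter,
   which is the constant 'X%:P of {poly {poly R}}. *)
Lemma slice_line m o (w v : 'rV[R]_7) :
  slice_poly m o (line w v) =
  (slice_poly m o (w ord0))^:P + 'X%:P * (slice_poly m o (v ord0))^:P.
Proof.
apply/polyP => i; rewrite coefD coefCM !coef_map !coef_poly /line /=.
by case: (i < m)%N; rewrite ?mulr0 ?addr0 // mulrC.
Qed.

(* First-order part of (F0 + T F1)^2 + (G0 + T G1)^3: the differential of
   (f, g) |-> f^2 + g^3 is (df, dg) |-> 2 f df + 3 g^2 dg. *)
Lemma coef1_sq_cube (F0 F1 G0 G1 : {poly R}) j :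
  ((F0^:P + 'X%:P * F1^:P) ^+ 2 + (G0^:P + 'X%:P * G1^:P) ^+ 3)`_j`_1 =
  (F0 * F1 *+ 2 + G0 ^+ 2 * G1 *+ 3)`_j.
Proof.
set T : {poly {poly R}} := 'X%:P.
have -> : (F0^:P + T * F1^:P) ^+ 2 + (G0^:P + T * G1^:P) ^+ 3 =
    (F0 ^+ 2 + G0 ^+ 3)^:P + T * (F0 * F1 *+ 2 + G0 ^+ 2 * G1 *+ 3)^:P
    + T ^+ 2 * (F1 ^+ 2 + G0 * G1 ^+ 2 *+ 3)^:P + T ^+ 3 * (G1 ^+ 3)^:P.
  by rewrite !(rmorphD, rmorphM, rmorphXn, rmorphMn); ring.
rewrite -!rmorphXn !coefD !coefCM !coef_map /= !coefD coefXM (coefXnM 2) (coefXnM 3).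
by rewrite !coefC /= add0r !addr0.
Qed.

Lemma jacobian_sq_cube w j k :
  J w j k = (fpoly (w ord0) * fpoly (delta k ord0) *+ 2 +
             gpoly (w ord0) ^+ 2 * gpoly (delta k ord0) *+ 3)`_j.
Proof. by rewrite mxE /sq_cube !slice_line coef1_sq_cube. Qed.

Lemma slice_polyD m o (a b : 'rV[R]_7) :
  slice_poly m o ((a + b) ord0) = slice_poly m o (a ord0) + slice_poly m o (b ord0).
Proof. by apply/polyP => i; rewrite coefD !coef_poly mxE; case: ifP; rewrite ?addr0. Qed.

Lemma slice_delta m o (k : 'I_7) : (o + m <= 7)%N ->
  slice_poly m o (delta k ord0) = if (o <= k < o + m)%N then 'X^(k - o) else 0 :> {poly R}.
Proof.
move=> le7; apply/polyP => i; rewrite coef_poly mxE.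
have [i_lt|i_ge] := ltnP i m; last first.
  by case: ifP => k_in; rewrite ?coefXn ?coef0 //; case: eqP => //; lia.
rewrite -val_eqE /= inordK; last by lia.
case: ifP => k_in; rewrite ?coefXn ?coef0; last by case: eqP => //; lia.
by congr (_%:R); apply/eqP/eqP; lia.
Qed.

(* The base point (f, g) = (1, X^2), where f^2 + g^3 = 1 + X^6. *)
Definition w0 : 'rV[R]_7 := delta ord0 + delta (ord_max : 'I_7).

(* At w0 the differential is (df, dg) |-> 2 df + 3 X^4 dg, a diagonal
   matrix in the monomial bases. *)
Lemma jacobian_w0 : J w0 = diag_mx (\row_k (if (k < 4)%N then 2 else 3)).
Proof.
apply/matrixP => j k; rewrite jacobian_sq_cube !mxE !slice_polyD !slice_delta //=.
rewrite expr0 addr0 add0r mul1r -exprM subn0 (_ : ((6 - 4) * 2 = 4)%N) //.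
have eq_jk : (nat_of_ord j == k) = (j == k) by [].
case: ifP => k_lt4; case: ifP => k_ge4; try by have := ltn_ord k; lia.
  rewrite mulr0 mul0rn addr0 coefMn coefXn eq_jk.
  by case: (eqVneq j k) => [->|_]; rewrite ?k_lt4 ?mul0rn.
rewrite mul0rn add0r -exprD subnKC; last by lia.
rewrite coefMn coefXn eq_jk.
by case: (eqVneq j k) => [->|_]; rewrite ?k_lt4 ?mul0rn.
Qed.

(* The Jacobian of Phi is invertible at w0, as 2 and 3 are nonzero in
   characteristic zero. *)
Lemma det_jacobian_w0 : \det (J w0) != 0.
Proof.
rewrite jacobian_w0 det_diag; apply/prodf_neq0 => k _; rewrite mxE.
by case: ifP => _; rewrite pnatr_eq0.
Qed.

End SquarePlusCube.

Lemma qf_equivalent (F : closedFieldType) (f : GRing.formula F) : GRing.rformula f ->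
  exists psi, [/\ GRing.qf_form psi, GRing.rformula psi &
                  forall e, GRing.qf_eval e psi <-> GRing.holds e f].
Proof.
move=> rf; pose psi := GRing.quantifier_elim (@ClosedFieldQE.ex_elim F) f.
have /andP[qf_psi rf_psi] := GRing.quantifier_elim_wf (@ClosedFieldQE.wf_ex_elim F) rf.
exists psi; split=> // e.
have holdsP := GRing.quantifier_elim_rformP (@ClosedFieldQE.wf_ex_elim F)
  (ClosedFieldQE.holds_ex_elim (@solve_monicpoly F)) e rf.
by split=> /holdsP.
Qed.

(* The image of Phi is defined by a first-order formula in the variables
   'X_0 .. 'X_6 (the point v) with 'X_7 .. 'X_13 existentially quantified
   (the coefficients of f and g). *)
Section ImageFormula.
Variable F : fieldType.
Local Notation tF := (GRing.term F).

Lemma holds_exists_iota (e : seq F) k (f : GRing.formula F) :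
  GRing.holds e (foldr (@GRing.Exists F) f (iota (size e) k)) <->
  exists s : seq F, size s = k /\ GRing.holds (e ++ s) f.
Proof.
elim: k e => [|k IH] e /=.
  split=> [hf|[s [/size0nil -> ]]]; last by rewrite cats0.
  by exists [::]; rewrite cats0.
have set_end x : set_nth 0 e (size e) x = e ++ [:: x] by rewrite set_nthE ltnn subnn.
have size_end x : (size e).+1 = size (e ++ [:: x]) by rewrite size_cat addn1.
split=> [[x]|[[|x s] [//= [size_s] hf]]].
  rewrite set_end (size_end x) => /IH [s [size_s hf]].
  by exists (x :: s); rewrite /= size_s -catA in hf *.
exists x; rewrite set_end (size_end x); apply/IH.
by exists s; rewrite -catA.
Qed.

Lemma holds_conj_eqs e (s : seq nat) (T : nat -> tF) :
  GRing.holds e (foldr (fun j f => GRing.And (GRing.Equal (GRing.Var _ j) (T j)) f)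
    (GRing.Bool true) s) <-> forall j, j \in s -> e`_j = GRing.eval e (T j).
Proof.
elim: s => [|a s IH] /=; first by split.
split=> [[eq_a /IH eq_s] j|eqs]; first by rewrite inE => /orP[/eqP->|/eq_s].
split; first by apply: eqs; rewrite inE eqxx.
by apply/IH => j j_s; apply: eqs; rewrite inE j_s orbT.
Qed.

Lemma coef_eval_poly e (ts : seq tF) i :
  (ClosedFieldQE.eval_poly e ts)`_i = GRing.eval e (nth (GRing.Const 0) ts i).
Proof.
elim: ts i => [|t ts IH] i /=; first by rewrite coef0 nth_nil.
rewrite coefD coefMX coefC; case: i => [|i] /=; first by rewrite add0r.
by rewrite addr0 IH.
Qed.

Definition var_poly (o m : nat) : seq tF := [seq GRing.Var _ (o + i) | i <- iota 0 m].

Lemma eval_var_poly e o m :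
  ClosedFieldQE.eval_poly e (var_poly o m) = \poly_(i < m) e`_(o + i).
Proof.
apply/polyP => i; rewrite coef_eval_poly coef_poly.
case: ltnP => [i_lt|i_ge]; last by rewrite nth_default // size_map size_iota.
by rewrite (nth_map 0) ?size_iota // nth_iota.
Qed.

Definition sq_cube_term : seq tF :=
  ClosedFieldQE.sumpT (ClosedFieldQE.mulpT (var_poly 7 4) (var_poly 7 4))
    (ClosedFieldQE.mulpT (var_poly 11 3)
       (ClosedFieldQE.mulpT (var_poly 11 3) (var_poly 11 3))).

Definition image_body : GRing.formula F :=
  foldr (fun j f => GRing.And (GRing.Equal (GRing.Var _ j)
                                           (nth (GRing.Const 0) sq_cube_term j)) f)
    (GRing.Bool true) (iota 0 7).

Definition image_formula : GRing.formula F :=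
  foldr (@GRing.Exists F) image_body (iota 7 7).

Lemma rformula_image : GRing.rformula image_formula.
Proof. by []. Qed.

End ImageFormula.

Section Image.
Variable R : numClosedFieldType.

Lemma image_body_holds (e : seq R) : GRing.holds e (image_body R) <->
  forall j : 'I_7, e`_j = (sq_cube (fun k : 'I_7 => e`_(7 + k)))`_j.
Proof.
have slice_env (m o a : nat) : a = (7 + o)%N -> (o + m <= 7)%N ->
    \poly_(i < m) e`_(a + i) = slice_poly m o (fun k : 'I_7 => e`_(7 + k)).
  by move=> -> le7; apply: eq_poly => i i_lt; rewrite inordK ?addnA //; lia.
have eval_term j : GRing.eval e (nth (GRing.Const 0) (sq_cube_term R) j) =
    (sq_cube (fun k : 'I_7 => e`_(7 + k)))`_j.
  rewrite -coef_eval_poly ClosedFieldQE.eval_sumpT !ClosedFieldQE.eval_mulpT.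
  by rewrite !eval_var_poly (slice_env 4%N 0%N 7%N) // (slice_env 3%N 4%N 11%N).
rewrite holds_conj_eqs; split=> eqs j.
  by rewrite eqs ?eval_term // mem_iota add0n ltn_ord.
by rewrite mem_iota add0n eval_term => j_lt; apply: (eqs (Ordinal j_lt)).
Qed.

Lemma image_formula_holds (v : 'rV[R]_7) :
  GRing.holds (env v) (image_formula R) <-> exists w, v = Phi w.
Proof.
have nth_lo (s : seq R) (j : 'I_7) : (env v ++ s)`_j = v ord0 j.
  by rewrite nth_cat size_env ltn_ord nth_env.
have nth_hi (s : seq R) k : (env v ++ s)`_(7 + k) = s`_k.
  by rewrite nth_cat size_env ltnNge leq_addr addKn.
rewrite /image_formula -[in iota 7 7](size_env v) holds_exists_iota.
split=> [[s [_ /image_body_holds eqs]]|[w v_eq]].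
  exists (\row_k s`_k); apply/rowP => j; rewrite !mxE -(nth_lo s) eqs.
  by congr (polyseq _)`_j; apply: eq_sq_cube => k; rewrite nth_hi mxE.
subst v; exists (env w); split; first by rewrite !size_env.
apply/image_body_holds => j; rewrite nth_lo mxE.
by congr (polyseq _)`_j; apply: eq_sq_cube => k; rewrite nth_hi nth_env.
Qed.

(* The image of Phi contains a nonempty Zariski-open set: the generic truth
   value of "v is in the image" cannot be false, for then a nonzero
   polynomial would vanish on the image, contradicting dominance. *)
Lemma image_generic : generically (fun v : 'rV[R]_7 => exists w, v = Phi w).
Proof.
have [psi [qf_psi rf_psi psiP]] := qf_equivalent (rformula_image R).
have [[] gen] := qf_generic_bool 7 qf_psi rf_psi.
  by apply: generically_impl gen => v /psiP/image_formula_holds.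
have [q [[v0 q_v0] q_notin]] := gen.
have q_Phi0 w : eval q (Phi w) = 0.
  have /psiP in_image : GRing.holds (env (Phi w)) (image_formula R).
    by apply/image_formula_holds; exists w.
  by apply/eqP; apply/negPn/negP => /q_notin; rewrite in_image.
have J_coef (w : 'rV[R]_7) j k : J w j k = ((sq_cube (line w (delta k)))`_j)`_1.
  by rewrite mxE.
have := @dominance _ _ (@Phi R) (fun Q j => (sq_cube Q)`_j) (@J R) (@Phi_curve R) J_coef
  (@J_line_poly R) (ex_intro _ (w0 R) (@det_jacobian_w0 R)) q q_Phi0 v0.
by move/eqP: q_v0.
Qed.

End Image.

Section Homogenize.
Variable R : comNzRingType.

Definition hom (d : nat) (q : {poly R}) : {poly {poly R}} :=
  \poly_(i < d.+1) (q`_i *: 'X^(d - i)).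

Definition dehom (P : {poly {poly R}}) : {poly R} := map_poly (horner_eval 1) P.

Lemma hom_coef d q i j :
  (hom d q)`_i`_j = if (i <= d)%N && (j == d - i)%N then q`_i else 0.
Proof.
rewrite /hom coef_poly ltnS; case: (i <= d)%N => /=; last by rewrite coef0.
by rewrite coefZ coefXn; case: (j == d - i)%N; rewrite ?mulr1 ?mulr0.
Qed.

Lemma homog_hom d q : homog d (hom d q).
Proof.
move=> i j; rewrite hom_coef; case: ifP => [/andP[le_id /eqP->] _|_]; last by rewrite eqxx.
by rewrite subnKC.
Qed.

Lemma homogD d (P Q : {poly {poly R}}) : homog d P -> homog d Q -> homog d (P + Q).
Proof.
move=> homP homQ i j; rewrite !coefD.
by have [->|/homP //] := eqVneq P`_i`_j 0; rewrite add0r; exact: homQ.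
Qed.

Lemma homogM a b (P Q : {poly {poly R}}) :
  homog a P -> homog b Q -> homog (a + b) (P * Q).
Proof.
move=> homP homQ i j; apply: contraNeq => ij_ne.
rewrite coefM coef_sum; apply/eqP; apply: big1 => k _; rewrite coefM; apply: big1 => l _.
have [->|/homP Pkl] := eqVneq P`_k`_l 0; first by rewrite mul0r.
have [->|/homQ Qkl] := eqVneq Q`_(i - k)`_(j - l) 0; first by rewrite mulr0.
by move: ij_ne; have := ltn_ord k; have := ltn_ord l; lia.
Qed.

Lemma homog_eq d (P Q : {poly {poly R}}) : homog d P -> homog d Q ->
  (forall i, (i <= d)%N -> P`_i`_(d - i) = Q`_i`_(d - i)) -> P = Q.
Proof.
move=> homP homQ eq_coef; apply/polyP => i; apply/polyP => j.
have [ij_d|ij_ne] := eqVneq (i + j)%N d.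
  by rewrite (_ : j = d - i)%N ?eq_coef //; lia.
have [P0|/homP ij] := eqVneq P`_i`_j 0; last by rewrite ij eqxx in ij_ne.
have [Q0|/homQ ij] := eqVneq Q`_i`_j 0; first by rewrite P0 Q0.
by rewrite ij eqxx in ij_ne.
Qed.

Lemma dehom_coef d (P : {poly {poly R}}) i : homog d P -> (dehom P)`_i = P`_i`_(d - i).
Proof.
move=> homP; rewrite coef_map /= horner_evalE.
have -> : P`_i = P`_i`_(d - i) *: 'X^(d - i).
  apply/polyP => m; rewrite coefZ coefXn.
  have [->|ne] := eqVneq m (d - i)%N; first by rewrite mulr1.
  by rewrite mulr0; apply/eqP; apply: contraT => /homP; lia.
by rewrite hornerZ hornerXn expr1n mulr1 coefZ coefXn eqxx mulr1.
Qed.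

Lemma dehom_hom d (q : {poly R}) : (size q <= d.+1)%N -> dehom (hom d q) = q.
Proof.
move=> size_q; apply/polyP => i.
rewrite (dehom_coef i (@homog_hom d q)) hom_coef eqxx andbT.
by case: leqP => // lt_di; rewrite nth_default // (leq_trans size_q lt_di).
Qed.

Lemma coords_surj d (v : 'rV[R]_d.+1) : exists p, homog d p /\ coords d p = v.
Proof.
exists (hom d (\poly_(i < d.+1) v ord0 (inord i))); split; first exact: homog_hom.
apply/rowP => i; rewrite mxE hom_coef -ltnS ltn_ord eqxx /=.
by rewrite coef_poly ltn_ord inord_val.
Qed.

End Homogenize.

Lemma sq_cube_of_coords (R : numDomainType) (p : {poly {poly R}}) (w : 'rV[R]_7) :
  homog 6 p -> coords 6 p = Phi w ->
  p = hom 3 (fpoly (w ord0)) ^+ 2 + hom 2 (gpoly (w ord0)) ^+ 3.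
Proof.
move=> homp coords_p; set F := fpoly _; set G := gpoly _.
have homF := @homog_hom _ 3 F; have homG := @homog_hom _ 2 G.
have hom6 : homog 6 (hom 3 F ^+ 2 + hom 2 G ^+ 3).
  apply: homogD; first by rewrite expr2; exact: (homogM homF homF).
  by rewrite !exprS expr0 mulr1; exact: (homogM homG (homogM homG homG)).
apply: (homog_eq homp hom6) => i le_i6.
rewrite -(dehom_coef i hom6) /dehom rmorphD !rmorphXn /= -!/(dehom _).
rewrite !dehom_hom ?size_poly //.
have /rowP/(_ (inord i)) := coords_p.
by rewrite !mxE inordK // => ->.
Qed.

(* Main theorem: S = {q} with q from image_generic.  Every sextic p with
   q(coords p) <> 0 has coordinates Phi w, hence is f^2 + g^3 for the forms
   f, g encoded by w; and some sextic has q(coords p) <> 0. *)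
Theorem theorem1p5 (R : numClosedFieldType) :
  exists S : ('rV[R]_7 -> R) -> Prop,
    (forall h, S h -> polyfun h) /\
    (exists p : {poly {poly R}}, homog 6 p /\ ~ zero_locus S (coords 6 p)) /\
    (forall p : {poly {poly R}}, homog 6 p -> ~ zero_locus S (coords 6 p) ->
       exists f g : {poly {poly R}},
         [/\ homog 3 f, homog 2 g & p = f ^+ 2 + g ^+ 3]).
Proof.
have [q [[v0 q_v0] q_image]] := image_generic R.
exists (fun h => h = eval q); split; first by move=> h ->; exact: polyfun_eval.
split.
  have [p [homp coords_p]] := coords_surj v0.
  by exists p; split=> // /(_ _ erefl)/eqP; rewrite coords_p (negbTE q_v0).
move=> p homp p_notin.
have /q_image [w coords_p] : eval q (coords 6 p) != 0.
  by apply/eqP => q_p; apply: p_notin => h ->.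
exists (hom 3 (fpoly (w ord0))), (hom 2 (gpoly (w ord0))).
by split; [exact: homog_hom | exact: homog_hom | exact: sq_cube_of_coords].
Qed.
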